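(* Let $(K,\mathbb D)$ be an $F[m]$-field for the group law $F$ of the context. Let $0\le n\le m-1$ and $i,j<p^{n+1}$ with $(i,j)\neq(0,0)$. Then $F_n\subseteq\ker D_{(i,j)}$.
   Context: $k$ is a perfect field of characteristic $p>0$, $m\in\mathbb N_{>0}$. For $1\le i\le p-1$ let $\lambda_i\in\mathbb F_p$ be the image of $\frac1p\binom pi$, and $H_n(X_2,Y_2):=\sum_{i=1}^{p-1}\lambda_iX_2^{ip^n}Y_2^{(p-i)p^n}$. Fix $M\in\mathbb N$, $\alpha_0,\dots,\alpha_M\in k$, and let $F(X_1,X_2,Y_1,Y_2):=\big(X_1+Y_1+\sum_{n=0}^M\alpha_nH_n(X_2,Y_2),\ X_2+Y_2\big)$. Let $v_1,v_2,w_1,w_2$ be $m$-truncated variables ($k[\bar v,\bar w]=k[X_1,X_2,Y_1,Y_2]/(X_i^{p^m},Y_i^{p^m})$), $F[m]$ the image of $F$. An $F[m]$-field is a field $K\supseteq k$ with a family $(D_{(i,j)}:K\to K)_{0\le i,j<p^m}$, $D_{(0,0)}=\mathrm{id}$, such that $r\mapsto\sum D_{(i,j)}(r)v_1^iv_2^j$ is a $k$-algebra homomorphism $K\to K[v_1,v_2]$ and $\sum D_{(j_1,j_2)}(D_{(i_1,i_2)}(r))v_1^{i_1}v_2^{i_2}w_1^{j_1}w_2^{j_2}=\sum D_{(i_1,i_2)}(r)F[m]_1^{i_1}F[m]_2^{i_2}$ for all $r$. For $0\le s\le m-1$, $F_s:=\bigcap_{j=0}^s\big(\ker D_{(p^j,0)}\cap\ker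 D_{(0,p^j)}\big)$. *)

From HB Require Import structures.
From mathcomp Require Import all_boot all_order all_algebra.
Set Implicit Arguments. Unset Strict Implicit. Unset Printing Implicit Defensive.
Import GRing.Theory.
Local Open Scope ring_scope.

Definition perfect_pchar (k : fieldType) (p : nat) : Prop :=
  p \in [pchar k] /\ forall x : k, exists y : k, y ^+ p = x.

(* Polynomials in 4 variables v1, v2, w1, w2 over K, as nested univariate
   polynomials.  v1 is the innermost variable, w2 the outermost. *)
Definition P4 (K : fieldType) := {poly {poly {poly {poly K}}}}.

Definition cst4 (K : fieldType) (c : K) : P4 K := c%:P%:P%:P%:P.
Definition v1 (K : fieldType) : P4 K := 'X%:P%:P%:P.
Definition v2 (K : fieldType) : P4 K := 'X%:P%:P.
Definition w1 (K : fieldType) : P4 K := 'X%:P.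
Definition w2 (K : fieldType) : P4 K := 'X.

(* coefficient of v1^a v2^b w1^c w2^d *)
Definition coef4 (K : fieldType) (P : P4 K) (a b c d : nat) : K :=
  P`_d`_c`_b`_a.

(* Equality in K[v1,v2,w1,w2]/(v1^N, v2^N, w1^N, w2^N): since the ideal is
   monomial, two polynomials are congruent iff their coefficients on all
   monomials with all exponents < N agree. *)
Definition trunc_eq (K : fieldType) (N : nat) (P Q : P4 K) : Prop :=
  forall a b c d, (a < N)%N -> (b < N)%N -> (c < N)%N -> (d < N)%N ->
    coef4 P a b c d = coef4 Q a b c d.

(* lambda_i = image in F_p (hence in K) of (1/p) binom(p,i) *)
Definition lambda (K : fieldType) (p i : nat) : K := ('C(p, i) %/ p)%:R.

(* H_n(X2, Y2) evaluated at X2 := v2, Y2 := w2 *)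
Definition Hn (K : fieldType) (p n : nat) : P4 K :=
  \sum_(1 <= i < p) cst4 (lambda K p i) * v2 K ^+ (i * p ^ n) * w2 K ^+ ((p - i) * p ^ n).

(* The group law F, with X := v, Y := w, coefficients alpha mapped into K. *)
Definition F1 (k K : fieldType) (iota : {rmorphism k -> K}) (p M : nat)
  (alpha : nat -> k) : P4 K :=
  v1 K + w1 K + \sum_(0 <= n < M.+1) cst4 (iota (alpha n)) * Hn K p n.
Definition F2 (K : fieldType) : P4 K := v2 K + w2 K.

Definition Dser (K : fieldType) (N : nat) (D : nat -> nat -> K -> K) (r : K) : P4 K :=
  \sum_(i < N) \sum_(j < N) cst4 (D i j r) * v1 K ^+ i * v2 K ^+ j.

Definition is_Fm_field (k K : fieldType) (iota : {rmorphism k -> K})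
  (p m M : nat) (alpha : nat -> k) (D : nat -> nat -> K -> K) : Prop :=
  let N := (p ^ m)%N in
  (forall r, D 0%N 0%N r = r) /\
  (* r |-> Dser r is a k-algebra homomorphism K -> K[v1,v2]/(v1^N,v2^N) *)
  (forall r s, trunc_eq N (Dser N D (r + s)) (Dser N D r + Dser N D s)) /\
  (forall r s, trunc_eq N (Dser N D (r * s)) (Dser N D r * Dser N D s)) /\
  trunc_eq N (Dser N D 1) 1 /\
  (forall (c : k) r, trunc_eq N (Dser N D (iota c * r)) (cst4 (iota c) * Dser N D r)) /\
  (forall r,
     trunc_eq N
       (\sum_(i1 < N) \sum_(i2 < N) \sum_(j1 < N) \sum_(j2 < N)
          cst4 (D j1 j2 (D i1 i2 r)) * v1 K ^+ i1 * v2 K ^+ i2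
            * w1 K ^+ j1 * w2 K ^+ j2)
       (\sum_(i1 < N) \sum_(i2 < N)
          cst4 (D i1 i2 r) * F1 iota p M alpha ^+ i1 * F2 K ^+ i2)).

Definition Fs (K : fieldType) (p s : nat) (D : nat -> nat -> K -> K) (x : K) : Prop :=
  forall j, (j <= s)%N -> D (p ^ j)%N 0%N x = 0 /\ D 0%N (p ^ j)%N x = 0.

From HB Require Import structures.
From mathcomp Require Import all_boot all_order all_algebra.
From mathcomp Require Import zify.
Import GRing.Theory.
Local Open Scope ring_scope.
Set Implicit Arguments. Unset Strict Implicit.

(* Compare coefficients in the iteration rule
     D_c (D_b x) = \sum_a D_a x * [v^b w^c] (F1^a1 F2^a2),
   which holds for all exponents below p^m.  Modulo terms of positive degree
   in v2, w2 we have F1 = v1 + w1, so for b = (p^v, 0), c = (i - p^v, 0) with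
   p^v the exact power of p dividing i the rule reduces to
   0 = 'C(i, p^v) D_(i,0) x, and 'C(i, p^v) is prime to p.  Next b = (i, 0),
   c = (0, j) give D_(i,j) x = D_(0,j) (D_(i,0) x) = 0.  Finally D_(0,j) x
   is treated like D_(i,0) x with F2 = v2 + w2: the terms with a1 > 0 vanish
   by the previous step or, when a1 + a2 > j, for degree reasons. *)

Lemma sum_ord_single (V : nmodType) N t (F : 'I_N -> V) (ht : (t < N)%N) :
  (forall i : 'I_N, (i : nat) != t -> F i = 0) -> \sum_(i < N) F i = F (Ordinal ht).
Proof. by move=> F0; apply: big_only1 => // i; rewrite -val_eqE => /F0. Qed.
Arguments sum_ord_single {V N t F}.

(* Compare the coefficients of X^q in (X + 1)^i = (X^q + 1)^i' over 'F_p,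
   where i = i' q with q = p^(logn p i) and i' prime to p. *)
Lemma prime_ndvd_bin_pfactor p i : prime p -> (0 < i)%N ->
  ~~ (p %| 'C(i, p ^ logn p i))%N.
Proof.
move=> p_pr i_gt0; have pF := pchar_Fp p_pr.
have [i' p_i' Ei] := pfactor_coprime p_pr i_gt0.
set q := (p ^ logn p i)%N in Ei *; rewrite (dvdn_pcharf pF).
have q_gt0 : (0 < q)%N by rewrite expn_gt0 prime_gt0.
have i'_gt0 : (0 < i')%N by move: i_gt0; rewrite Ei muln_gt0 => /andP[].
have pP : p \in [pchar {poly 'F_p}] by rewrite pchar_poly.
have frobX1 : ('X + 1 : {poly 'F_p}) ^+ q = 'X ^+ q + 1.
  by rewrite exprDn_pchar ?expr1n // /q pnatX (pnatE _ p_pr) pP.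
have := congr1 (fun P : {poly 'F_p} => (P ^+ i')`_q) frobX1.
rewrite /= -exprM mulnC -Ei !exprD1n !coef_sum.
have q_lt : (q < i.+1)%N by rewrite ltnS Ei leq_pmull.
rewrite (sum_ord_single q_lt) /=; last first.
  by move=> k kNq; rewrite coefMn coefXn eq_sym (negbTE kNq) mul0rn.
rewrite (sum_ord_single (i'_gt0 : (1 < i'.+1)%N)) /=; last first.
  move=> k kN1; rewrite coefMn -exprM coefXn -{1}(muln1 q) eqn_pmul2l //.
  by rewrite eq_sym (negbTE kN1) mul0rn.
rewrite coefMn coefXn eqxx coefMn -exprM muln1 coefXn eqxx bin1 => ->.
by rewrite -(dvdn_pcharf pF) -prime_coprime.
Qed.

Lemma pfactor_logn_bounds p n i : (1 < p)%N -> (0 < i)%N -> (i < p ^ n.+1)%N ->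
  (logn p i <= n)%N /\ (p ^ logn p i <= i)%N.
Proof.
move=> p_gt1 i_gt0 i_lt; have le_pi : (p ^ logn p i <= i)%N.
  exact: dvdn_leq i_gt0 (pfactor_dvdnn p i).
split=> //; rewrite -ltnS -(ltn_exp2l _ _ p_gt1).
exact: leq_ltn_trans le_pi i_lt.
Qed.

Section Coef4.
Variable K : fieldType.
Implicit Types P Q : P4 K.

Lemma coef4D P Q a b c e : coef4 (P + Q) a b c e = coef4 P a b c e + coef4 Q a b c e.
Proof. by rewrite /coef4 !coefD. Qed.

Lemma coef4N P a b c e : coef4 (- P) a b c e = - coef4 P a b c e.
Proof. by rewrite /coef4 !coefN. Qed.

Lemma coef40 a b c e : coef4 (0 : P4 K) a b c e = 0.
Proof. by rewrite /coef4 !coef0. Qed.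

Lemma coef4_sum (I : Type) (r : seq I) (Pr : pred I) (F : I -> P4 K) a b c e :
  coef4 (\sum_(i <- r | Pr i) F i) a b c e = \sum_(i <- r | Pr i) coef4 (F i) a b c e.
Proof. by rewrite /coef4 !coef_sum. Qed.

Lemma coef4_cstM g P a b c e : coef4 (cst4 g * P) a b c e = g * coef4 P a b c e.
Proof. by rewrite /coef4 /cst4 !coefCM. Qed.

Lemma coef4_natmul P k a b c e : coef4 (P *+ k) a b c e = coef4 P a b c e *+ k.
Proof. by rewrite /coef4 !coefMn. Qed.

Lemma coef4M P Q a b c e : coef4 (P * Q) a b c e =
  \sum_(e1 < e.+1) \sum_(c1 < c.+1) \sum_(b1 < b.+1) \sum_(a1 < a.+1)
    coef4 P a1 b1 c1 e1 * coef4 Q (a - a1) (b - b1) (c - c1) (e - e1).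
Proof.
rewrite /coef4 coefM !coef_sum; apply: eq_bigr => e1 _.
rewrite coefM !coef_sum; apply: eq_bigr => c1 _.
by rewrite coefM !coef_sum; apply: eq_bigr => b1 _; rewrite coefM.
Qed.

Lemma coef4_mono x y z t a b c e :
  coef4 (v1 K ^+ x * v2 K ^+ y * w1 K ^+ z * w2 K ^+ t) a b c e =
  if [&& x == a, y == b, z == c & t == e] then 1 else 0.
Proof.
rewrite /coef4 /v1 /v2 /w1 /w2 -!rmorphXn -!rmorphM /=.
rewrite coefCM coefXn [e == t]eq_sym; case: (t == e); last by rewrite mulr0 !coef0 !andbF.
rewrite mulr1 coefCM coefXn [c == z]eq_sym; case: (z == c); last by rewrite mulr0 !coef0 !andbF.
rewrite mulr1 coefCM coefXn [b == y]eq_sym; case: (y == b); last by rewrite mulr0 !coef0 !andbF.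
by rewrite mulr1 coefXn [a == x]eq_sym; case: (x == a).
Qed.

Lemma coef4_term g x y z t a b c e :
  coef4 (cst4 g * v1 K ^+ x * v2 K ^+ y * w1 K ^+ z * w2 K ^+ t) a b c e =
  if [&& x == a, y == b, z == c & t == e] then g else 0.
Proof. by rewrite -!mulrA coef4_cstM !mulrA coef4_mono; case: ifP; rewrite ?mulr1 ?mulr0. Qed.

Lemma coef4_sum4 N (g : nat -> nat -> nat -> nat -> K) a b c e :
  (a < N)%N -> (b < N)%N -> (c < N)%N -> (e < N)%N ->
  coef4 (\sum_(i1 < N) \sum_(i2 < N) \sum_(j1 < N) \sum_(j2 < N)
     cst4 (g i1 i2 j1 j2) * v1 K ^+ i1 * v2 K ^+ i2 * w1 K ^+ j1 * w2 K ^+ j2) a b c e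
  = g a b c e.
Proof.
move=> ha hb hc he; rewrite coef4_sum (sum_ord_single ha) /=; last first.
  move=> i1 /negbTE i1Na; rewrite coef4_sum big1 // => i2 _.
  rewrite coef4_sum big1 // => j1 _; rewrite coef4_sum big1 // => j2 _.
  by rewrite coef4_term i1Na.
rewrite coef4_sum (sum_ord_single hb) /=; last first.
  move=> i2 /negbTE i2Nb; rewrite coef4_sum big1 // => j1 _.
  by rewrite coef4_sum big1 // => j2 _; rewrite coef4_term i2Nb andbF.
rewrite coef4_sum (sum_ord_single hc) /=; last first.
  move=> j1 /negbTE j1Nc; rewrite coef4_sum big1 // => j2 _.
  by rewrite coef4_term j1Nc !andbF.
rewrite coef4_sum (sum_ord_single he) /=; last first.
  by move=> j2 /negbTE j2Ne; rewrite coef4_term j2Ne !andbF.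
by rewrite coef4_term !eqxx.
Qed.

Lemma coef4_Dser N (D : nat -> nat -> K -> K) r a b :
  (a < N)%N -> (b < N)%N -> coef4 (Dser N D r) a b 0 0 = D a b r.
Proof.
move=> ha hb; have term i j : cst4 (D i j r) * v1 K ^+ i * v2 K ^+ j =
    cst4 (D i j r) * v1 K ^+ i * v2 K ^+ j * w1 K ^+ 0 * w2 K ^+ 0.
  by rewrite !expr0 !mulr1.
rewrite /Dser coef4_sum (sum_ord_single ha) /=; last first.
  move=> i /negbTE iNa; rewrite coef4_sum big1 // => j _.
  by rewrite term coef4_term iNa.
rewrite coef4_sum (sum_ord_single hb) /=; last first.
  by move=> j /negbTE jNb; rewrite term coef4_term jNb andbF.
by rewrite term coef4_term !eqxx.
Qed.

Lemma sum_binomial_single n a c :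
  \sum_(i < n.+1) (if (n - i == a)%N && (i == c :> nat) then 1 else 0 : K) *+ 'C(n, i)
  = if (a + c == n)%N then ('C(n, c))%:R else 0.
Proof.
have [c_le|n_lt] := leqP c n.
  rewrite (sum_ord_single (c_le : (c < n.+1)%N)) /=; last first.
    by move=> i /negbTE iNc; rewrite iNc andbF mul0rn.
  have -> : (n - c == a)%N = (a + c == n)%N by apply/eqP/eqP; lia.
  by rewrite eqxx andbT; case: (_ == _); rewrite ?mul0rn.
have -> : (a + c == n)%N = false by apply/eqP; lia.
rewrite big1 // => -[i i_lt] _ /=; have -> : (i == c)%N = false by apply/eqP; lia.
by rewrite andbF mul0rn.
Qed.

Lemma coef4_v1w1_exp n a c : coef4 ((v1 K + w1 K) ^+ n) a 0 c 0 =
  if (a + c == n)%N then ('C(n, c))%:R else 0.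
Proof.
rewrite exprDn coef4_sum -sum_binomial_single; apply: eq_bigr => i _.
have -> : v1 K ^+ (n - i) * w1 K ^+ i = v1 K ^+ (n - i) * v2 K ^+ 0 * w1 K ^+ i * w2 K ^+ 0.
  by rewrite !expr0 !mulr1.
by rewrite coef4_natmul coef4_mono !andbT.
Qed.

Lemma coef4_v2w2_exp n b c : coef4 ((v2 K + w2 K) ^+ n) 0 b 0 c =
  if (b + c == n)%N then ('C(n, c))%:R else 0.
Proof.
rewrite exprDn coef4_sum -sum_binomial_single; apply: eq_bigr => i _.
have -> : v2 K ^+ (n - i) * w2 K ^+ i = v1 K ^+ 0 * v2 K ^+ (n - i) * w1 K ^+ 0 * w2 K ^+ i.
  by rewrite !expr0 !mulr1 mul1r.
by rewrite coef4_natmul coef4_mono.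
Qed.

End Coef4.

Section WeightedOrder.
Variables (K : fieldType) (wa wb wc we : nat).
Implicit Types P Q : P4 K.

Definition worder_ge P d := forall a b c e,
  (wa * a + wb * b + wc * c + we * e < d)%N -> coef4 P a b c e = 0.

Lemma worder_ge_trivial P : worder_ge P 0.
Proof. by move=> a b c e. Qed.

Lemma worder_geW P d d' : (d' <= d)%N -> worder_ge P d -> worder_ge P d'.
Proof. by move=> le_d P_d a b c e lt_d'; apply: P_d; apply: leq_trans lt_d' le_d. Qed.

Lemma worder_ge0 d : worder_ge 0 d.
Proof. by move=> *; rewrite coef40. Qed.

Lemma worder_geD P Q d : worder_ge P d -> worder_ge Q d -> worder_ge (P + Q) d.
Proof. by move=> P_d Q_d a b c e lt_d; rewrite coef4D P_d // Q_d // addr0. Qed.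

Lemma worder_ge_sum (I : Type) (r : seq I) (Pr : pred I) (F : I -> P4 K) d :
  (forall i, Pr i -> worder_ge (F i) d) -> worder_ge (\sum_(i <- r | Pr i) F i) d.
Proof.
move=> F_d; apply: (big_ind (worder_ge^~ d)); first exact: worder_ge0.
  by move=> P Q; apply: worder_geD.
exact: F_d.
Qed.

Lemma worder_ge_cstM g P d : worder_ge P d -> worder_ge (cst4 g * P) d.
Proof. by move=> P_d a b c e lt_d; rewrite coef4_cstM P_d // mulr0. Qed.

Lemma worder_geM P Q d1 d2 :
  worder_ge P d1 -> worder_ge Q d2 -> worder_ge (P * Q) (d1 + d2).
Proof.
move=> P_d1 Q_d2 a b c e lt_d; rewrite coef4M.
apply: big1 => -[e1 he1] _; apply: big1 => -[c1 hc1] _.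
apply: big1 => -[b1 hb1] _; apply: big1 => -[a1 ha1] _ /=.
have [lt_d1|ge_d1] := ltnP (wa * a1 + wb * b1 + wc * c1 + we * e1) d1.
  by rewrite P_d1 // mul0r.
rewrite Q_d2 ?mulr0 // !mulnBr.
have : (wa * a1 <= wa * a)%N by rewrite leq_mul2l -ltnS ha1 orbT.
have : (wb * b1 <= wb * b)%N by rewrite leq_mul2l -ltnS hb1 orbT.
have : (wc * c1 <= wc * c)%N by rewrite leq_mul2l -ltnS hc1 orbT.
have : (we * e1 <= we * e)%N by rewrite leq_mul2l -ltnS he1 orbT.
lia.
Qed.

Lemma worder_geX P d k : worder_ge P d -> worder_ge (P ^+ k) (k * d).
Proof.
move=> P_d; elim: k => [|k IHk]; first exact: worder_ge_trivial.
by rewrite exprS mulSn; apply: worder_geM.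
Qed.

Lemma worder_ge_mono x y z t :
  worder_ge (v1 K ^+ x * v2 K ^+ y * w1 K ^+ z * w2 K ^+ t)
            (wa * x + wb * y + wc * z + we * t).
Proof.
move=> a b c e; rewrite coef4_mono.
by case: ifP => // /and4P[/eqP-> /eqP-> /eqP-> /eqP->]; rewrite ltnn.
Qed.

Lemma worder_ge_v1 : worder_ge (v1 K) wa.
Proof.
by move: (worder_ge_mono (x:=1) (y:=0) (z:=0) (t:=0));
  rewrite !expr0 !mulr1 !muln0 muln1 !addn0.
Qed.

Lemma worder_ge_v2 : worder_ge (v2 K) wb.
Proof.
by move: (worder_ge_mono (x:=0) (y:=1) (z:=0) (t:=0));
  rewrite !expr0 !mulr1 mul1r !muln0 muln1 add0n !addn0.
Qed.

Lemma worder_ge_w1 : worder_ge (w1 K) wc.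
Proof.
by move: (worder_ge_mono (x:=0) (y:=0) (z:=1) (t:=0));
  rewrite !expr0 !mulr1 !mul1r !muln0 muln1 !add0n addn0.
Qed.

Lemma worder_ge_w2 : worder_ge (w2 K) we.
Proof.
by move: (worder_ge_mono (x:=0) (y:=0) (z:=0) (t:=1));
  rewrite !expr0 !mul1r !muln0 muln1 !add0n.
Qed.

Lemma worder_ge_subM P P' Q Q' d : worder_ge (P - P') d -> worder_ge (Q - Q') d ->
  worder_ge (P * Q - P' * Q') d.
Proof.
move=> P_d Q_d; have -> : P * Q - P' * Q' = (P - P') * Q + P' * (Q - Q').
  by rewrite mulrBl mulrBr addrA subrK.
apply: worder_geD; first by rewrite -[d]addn0; apply: worder_geM => //; apply: worder_ge_trivial.
by rewrite -[d]add0n; apply: worder_geM => //; apply: worder_ge_trivial.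
Qed.

Lemma worder_ge_subX P P' d k : worder_ge (P - P') d -> worder_ge (P ^+ k - P' ^+ k) d.
Proof.
move=> P_d; elim: k => [|k IHk]; first by rewrite !expr0 subrr; apply: worder_ge0.
by rewrite !exprS; apply: worder_ge_subM.
Qed.

Lemma worder_ge_coef4_eq P P' d a b c e : worder_ge (P - P') d ->
  (wa * a + wb * b + wc * c + we * e < d)%N -> coef4 P a b c e = coef4 P' a b c e.
Proof. by move=> PP'_d lt_d; apply/eqP; rewrite -subr_eq0 -coef4N -coef4D PP'_d. Qed.

Lemma worder_ge_Hn p n : worder_ge (Hn K p n) (wb + we).
Proof.
rewrite /Hn big_seq; apply: worder_ge_sum => i; rewrite mem_index_iota => /andP[i_gt0 i_lt].
rewrite -mulrA; apply: worder_ge_cstM; apply: worder_geW (worder_geM _ _); last first.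
- exact: worder_geX worder_ge_w2.
- exact: worder_geX worder_ge_v2.
have pn_gt0 : (0 < p ^ n)%N by rewrite expn_gt0 (leq_trans i_gt0 (ltnW i_lt)).
by apply: leq_add; apply: leq_pmull; rewrite muln_gt0 ?subn_gt0 ?i_gt0 ?i_lt pn_gt0.
Qed.

Lemma worder_ge_group_law_tail p M (g : nat -> K) :
  worder_ge (\sum_(0 <= n < M.+1) cst4 (g n) * Hn K p n) (wb + we).
Proof. by apply: worder_ge_sum => n _; apply: worder_ge_cstM; apply: worder_ge_Hn. Qed.

End WeightedOrder.

Section FmField.
Variables (k K : fieldType) (p m M : nat) (alpha : nat -> k)
  (iota : {rmorphism k -> K}) (D : nat -> nat -> K -> K).
Hypothesis hk : perfect_pchar k p.
Hypothesis hm : (0 < m)%N.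
Hypothesis hD : is_Fm_field iota p m M alpha D.

Let F1m : P4 K := F1 iota p M alpha.

Lemma pchar_K : p \in [pchar K].
Proof. exact: (rmorph_pchar iota hk.1). Qed.

Lemma p_gt1 : (1 < p)%N.
Proof. exact: prime_gt1 (pcharf_prime pchar_K). Qed.

Lemma pm_gt0 : (0 < p ^ m)%N.
Proof. by rewrite expn_gt0 ltnW // p_gt1. Qed.

Lemma lt_pm n i : (n <= m - 1)%N -> (i < p ^ n.+1)%N -> (i < p ^ m)%N.
Proof. by move=> le_n /leq_trans; apply; rewrite leq_exp2l ?p_gt1 //; lia. Qed.

Lemma bin_pfactor_neq0 i : (0 < i)%N -> ('C(i, p ^ logn p i))%:R != 0 :> K.
Proof.
by move=> i_gt0; rewrite -(dvdn_pcharf pchar_K) prime_ndvd_bin_pfactor ?(pcharf_prime pchar_K).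
Qed.

Lemma D_0 a b : (a < p ^ m)%N -> (b < p ^ m)%N -> D a b 0 = 0.
Proof.
move=> ha hb; have [_ [Dadd _]] := hD.
have := Dadd 0 0 a b 0 0 ha hb pm_gt0 pm_gt0.
rewrite coef4D !coef4_Dser // addr0 => Dadd0.
by apply: (addrI (D a b 0)); rewrite -Dadd0 addr0.
Qed.

Lemma D_comp x b1 b2 c1 c2 : (b1 < p ^ m)%N -> (b2 < p ^ m)%N ->
  (c1 < p ^ m)%N -> (c2 < p ^ m)%N ->
  D c1 c2 (D b1 b2 x) = \sum_(a1 < p ^ m) \sum_(a2 < p ^ m)
     D a1 a2 x * coef4 (F1m ^+ a1 * F2 K ^+ a2) b1 b2 c1 c2.
Proof.
move=> hb1 hb2 hc1 hc2; have [_ [_ [_ [_ [_ Dcomp]]]]] := hD.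
have := Dcomp x b1 b2 c1 c2 hb1 hb2 hc1 hc2.
rewrite (coef4_sum4 (fun i1 i2 j1 j2 => D j1 j2 (D i1 i2 x))) // => ->.
rewrite coef4_sum; apply: eq_bigr => a1 _; rewrite coef4_sum; apply: eq_bigr => a2 _.
by rewrite -mulrA coef4_cstM.
Qed.

Lemma D_comp_ker x b1 b2 c1 c2 : (b1 < p ^ m)%N -> (b2 < p ^ m)%N ->
  (c1 < p ^ m)%N -> (c2 < p ^ m)%N -> D b1 b2 x = 0 ->
  \sum_(a1 < p ^ m) \sum_(a2 < p ^ m)
     D a1 a2 x * coef4 (F1m ^+ a1 * F2 K ^+ a2) b1 b2 c1 c2 = 0.
Proof. by move=> hb1 hb2 hc1 hc2 Dx0; rewrite -D_comp // Dx0 D_0. Qed.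

Lemma F1m_tail :
  F1m - (v1 K + w1 K) = \sum_(0 <= n < M.+1) cst4 (iota (alpha n)) * Hn K p n.
Proof. by rewrite /F1m /F1 addrC addKr. Qed.

(* Weight 1 on v2 and w2: at v2,w2-degree 0, F1 is v1 + w1 and F2 is 0. *)
Lemma coef4_F_v1w1 a1 a2 b c : coef4 (F1m ^+ a1 * F2 K ^+ a2) b 0 c 0 =
  if (a2 == 0)%N && (a1 == b + c)%N then ('C(a1, c))%:R else 0.
Proof.
rewrite (@worder_ge_coef4_eq _ 0 1 0 1 _ ((v1 K + w1 K) ^+ a1 * 0 ^+ a2) 1);
    last by rewrite !mul0n muln0 !addn0.
  case: a2 => [|a2]; first by rewrite !expr0 !mulr1 coef4_v1w1_exp eq_sym.
  by rewrite expr0n /= mulr0 coef40.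
apply: worder_ge_subM; apply: worder_ge_subX.
  by rewrite F1m_tail; apply: (worder_geW _ (worder_ge_group_law_tail _ _ _)).
by rewrite subr0; apply: worder_geD; [exact: worder_ge_v2 | exact: worder_ge_w2].
Qed.

(* First at v2-degree 0, where F1 = v1 + w1 and F2 = w2, then at w1-degree 0. *)
Lemma coef4_F_v1w2 a1 a2 i j : coef4 (F1m ^+ a1 * F2 K ^+ a2) i 0 0 j =
  if (a1 == i)%N && (a2 == j)%N then 1 else 0.
Proof.
rewrite (@worder_ge_coef4_eq _ 0 1 0 0 _ ((v1 K + w1 K) ^+ a1 * w2 K ^+ a2) 1);
    last by rewrite !mul0n !muln0 !addn0.
  rewrite (@worder_ge_coef4_eq _ 0 0 1 0 _ (v1 K ^+ a1 * w2 K ^+ a2) 1);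
      last by rewrite !mul0n !muln0 !addn0.
    have -> : v1 K ^+ a1 * w2 K ^+ a2 = v1 K ^+ a1 * v2 K ^+ 0 * w1 K ^+ 0 * w2 K ^+ a2.
      by rewrite !expr0 !mulr1.
    by rewrite coef4_mono !eqxx.
  apply: worder_ge_subM; apply: worder_ge_subX; last by rewrite subrr; apply: worder_ge0.
  by rewrite addrC addKr; apply: worder_ge_w1.
apply: worder_ge_subM; apply: worder_ge_subX.
  by rewrite F1m_tail; apply: worder_ge_group_law_tail.
by rewrite /F2 addrK; apply: worder_ge_v2.
Qed.

Lemma coef4_F2_v2w2 a2 b c : coef4 (F1m ^+ 0 * F2 K ^+ a2) 0 b 0 c =
  if (b + c == a2)%N then ('C(a2, c))%:R else 0.
Proof. by rewrite expr0 mul1r coef4_v2w2_exp. Qed.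

Lemma coef4_F_ltdeg a1 a2 b c : (b + c < a1 + a2)%N ->
  coef4 (F1m ^+ a1 * F2 K ^+ a2) 0 b 0 c = 0.
Proof.
move=> lt_deg; have : worder_ge 1 1 1 1 (F1m ^+ a1 * F2 K ^+ a2) (a1 * 1 + a2 * 1).
  apply: worder_geM; apply: worder_geX; last first.
    by apply: worder_geD; [exact: worder_ge_v2 | exact: worder_ge_w2].
  apply: worder_geD; first by apply: worder_geD; [exact: worder_ge_v1 | exact: worder_ge_w1].
  exact: (worder_geW _ (worder_ge_group_law_tail _ _ _)).
by apply; rewrite !muln1 !mul1n add0n addn0.
Qed.

Lemma Fs_D_i0 n i x : (n <= m - 1)%N -> (0 < i)%N -> (i < p ^ n.+1)%N -> Fs p n D x ->
  D i 0 x = 0.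
Proof.
move=> le_n i_gt0 i_lt Fs_x; have i_lt_pm := lt_pm le_n i_lt.
have [le_v le_pv] := pfactor_logn_bounds p_gt1 i_gt0 i_lt; set q := (p ^ logn p i)%N in le_pv *.
have [->|qNi] := eqVneq i q; first exact: (Fs_x _ le_v).1.
have lt_q : (q < i)%N by rewrite ltn_neqAle eq_sym qNi le_pv.
have Ei : (q + (i - q) = i)%N by rewrite subnKC.
have := D_comp_ker (ltn_trans lt_q i_lt_pm) pm_gt0 (leq_ltn_trans (leq_subr q i) i_lt_pm)
  pm_gt0 (Fs_x _ le_v).1.
under eq_bigr => a1 _ do under eq_bigr => a2 _ do rewrite coef4_F_v1w1 Ei.
rewrite (sum_ord_single i_lt_pm) /=; last first.
  by move=> a1 /negbTE a1Ni; apply: big1 => a2 _; rewrite a1Ni andbF mulr0.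
rewrite (sum_ord_single pm_gt0) /=; last by move=> a2 /negbTE a2N0; rewrite a2N0 mulr0.
rewrite !eqxx bin_sub // => /eqP.
by rewrite mulf_eq0 (negbTE (bin_pfactor_neq0 i_gt0)) orbF => /eqP.
Qed.

Lemma Fs_D_pos n i j x : (n <= m - 1)%N -> (0 < i)%N -> (i < p ^ n.+1)%N ->
  (j < p ^ n.+1)%N -> Fs p n D x -> D i j x = 0.
Proof.
move=> le_n i_gt0 i_lt j_lt Fs_x.
have := D_comp_ker (lt_pm le_n i_lt) pm_gt0 pm_gt0 (lt_pm le_n j_lt) (Fs_D_i0 le_n i_gt0 i_lt Fs_x).
under eq_bigr => a1 _ do under eq_bigr => a2 _ do rewrite coef4_F_v1w2.
rewrite (sum_ord_single (lt_pm le_n i_lt)) /=; last first.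
  by move=> a1 /negbTE a1Ni; apply: big1 => a2 _; rewrite a1Ni mulr0.
rewrite (sum_ord_single (lt_pm le_n j_lt)) /=; last first.
  by move=> a2 /negbTE a2Nj; rewrite a2Nj andbF mulr0.
by rewrite !eqxx mulr1.
Qed.

Lemma Fs_D_0j n j x : (n <= m - 1)%N -> (0 < j)%N -> (j < p ^ n.+1)%N -> Fs p n D x ->
  D 0 j x = 0.
Proof.
move=> le_n j_gt0 j_lt Fs_x; have j_lt_pm := lt_pm le_n j_lt.
have [le_v le_pv] := pfactor_logn_bounds p_gt1 j_gt0 j_lt; set q := (p ^ logn p j)%N in le_pv *.
have [->|qNj] := eqVneq j q; first exact: (Fs_x _ le_v).2.
have lt_q : (q < j)%N by rewrite ltn_neqAle eq_sym qNj le_pv.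
have Ej : (q + (j - q) = j)%N by rewrite subnKC.
have := D_comp_ker pm_gt0 (ltn_trans lt_q j_lt_pm) pm_gt0 (leq_ltn_trans (leq_subr q j) j_lt_pm)
  (Fs_x _ le_v).2.
rewrite (sum_ord_single pm_gt0) /=; last first.
  move=> [a1 a1_lt] /= a1N0; apply: big1 => -[a2 a2_lt] _ /=.
  have [le_deg|lt_deg] := leqP (a1 + a2) j; last by rewrite coef4_F_ltdeg ?mulr0 ?Ej.
  by rewrite (@Fs_D_pos n) ?mul0r //; lia.
under eq_bigr => a2 _ do rewrite coef4_F2_v2w2 Ej.
rewrite (sum_ord_single j_lt_pm) /=; last by move=> a2 /negbTE a2Nj; rewrite eq_sym a2Nj mulr0.
rewrite !eqxx bin_sub // => /eqP.
by rewrite mulf_eq0 (negbTE (bin_pfactor_neq0 j_gt0)) orbF => /eqP.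
Qed.

End FmField.

Theorem lemma4p4 (k K : fieldType) (p m M : nat) (alpha : nat -> k)
  (iota : {rmorphism k -> K}) (D : nat -> nat -> K -> K)
  (hk : perfect_pchar k p) (hm : (0 < m)%N)
  (hD : is_Fm_field iota p m M alpha D)
  (n i j : nat) (hn : (n <= m - 1)%N)
  (hi : (i < p ^ n.+1)%N) (hj : (j < p ^ n.+1)%N) (hij : (i, j) != (0%N, 0%N))
  (x : K) (hx : Fs p n D x) :
  D i j x = 0.
Proof.
have [i0|i_gt0] := posnP i; last exact: (Fs_D_pos hk hm hD hn i_gt0 hi hj hx).
have [j0|j_gt0] := posnP j; first by rewrite i0 j0 eqxx in hij.
by rewrite i0; exact: (Fs_D_0j hk hm hD hn j_gt0 hj hx).
Qed.
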